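(* Consider the multiset combinatorial auction model described in the context, and an auction that first asks demand queries and then value queries, whose allocation after any set of reports is a solution of the winner determination problem (WDP) on the inferred values. In such an auction, adding value queries can reduce efficiency, and the efficiency drop can be arbitrarily close to $100\%$: for every $\delta>0$ there exist an instance, a finite set of demand queries with truthful responses after which the WDP allocation has efficiency $1$, and one value query per bidder (answered truthfully) such that, after adding these value-query responses, the WDP allocation has efficiency less than $\delta$.
   Context: Multiset combinatorial auction: bidders $N=\{1,\dots,n\}$, items $M=\{1,\dots,m\}$ with capacities $c\in\mathbb{N}^m$. Bundles are $x\in\mathcal{X}=\{0,\dots,c_1\}\times\cdots\times\{0,\dots,c_m\}$. Each bidder $i$ has a value function $v_i:\mathcal{X}\to\mathbb{R}_{\ge0}$. Feasible allocations: $\mathcal{F}=\{a\in\mathcal{X}^n:\sum_i a_{ij}\le c_j\ \forall j\}$. Social welfare $V(a)=\sum_i v_i(a_i)$; efficiency of $a$ is $V(a)/\max_{a'\in\mathcal{F}}V(a')$. A demand query at prices $p\in\mathbb{R}^m_{\ge0}$ is answered truthfully by bidder $i$ with some $x_i^*(p)\in\arg\max_{x\in\mathcal{X}}\{v_i(x)-\langle p,x\rangle\}$; a value query for $x$ is answered with $v_i(x)$. With reports $R_i$ consisting of demand responses $R_i^{DQ}$ (pairs $(x,p)$) and value responses $R_i^{VQ}$ (pairs $(x,v_i(x))$), the inferred value is $\tilde v_i(x;R_i)=v_i(x)$ if $x$ appears in $R_i^{VQ}$ and otherwise $\max(\{\langle x,p\rangle:(x,p)\in R_i^{DQ}\}\cup\{0\})$.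 The WDP allocation is $a^*(R)\in\arg\max_{a\in\mathcal{F}}\sum_i\tilde v_i(a_i;R_i)$. *)

From HB Require Import structures.
From mathcomp Require Import all_boot all_order all_algebra.
From mathcomp Require Import reals.
Set Implicit Arguments. Unset Strict Implicit. Unset Printing Implicit Defensive.
Import Order.TTheory GRing.Theory Num.Theory.
Local Open Scope ring_scope.

Section Auction.
Variable R : realType.

Definition bundle (m : nat) (c : 'I_m -> nat) := {dffun forall j : 'I_m, 'I_(c j).+1}.

(* prices p in R^m (nonnegativity imposed where required) *)
Definition price (m : nat) := {ffun 'I_m -> R}.

Variables (n m : nat) (c : 'I_m -> nat).

Definition pdot (p : price m) (x : bundle c) : R := \sum_(j < m) p j * (nat_of_ord (x j))%:R.

Definition allocation := {ffun 'I_n -> bundle c}.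
Definition feasible (a : allocation) : bool :=
  [forall j : 'I_m, (\sum_(i < n) nat_of_ord (a i j) <= c j)%N].

Definition welfare (w : 'I_n -> bundle c -> R) (a : allocation) : R := \sum_(i < n) w i (a i).

(* max over feasible allocations (values are >= 0, so 0 is a harmless default) *)
Definition opt_welfare (w : 'I_n -> bundle c -> R) : R :=
  \big[Num.max/0]_(a : allocation | feasible a) welfare w a.

Definition efficiency (v : 'I_n -> bundle c -> R) (a : allocation) : R :=
  welfare v a / opt_welfare v.

Definition valid_values (v : 'I_n -> bundle c -> R) := forall i x, 0 <= v i x.

Definition truthful_demand (vi : bundle c -> R) (r : bundle c * price m) :=
  (forall j, 0 <= r.2 j) /\ forall y : bundle c, vi y - pdot r.2 y <= vi r.1 - pdot r.2 r.1.

(* inferred value: value reports are truthful (the report of x is vi x), so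
   R_i^{VQ} is represented by the list of queried bundles *)
Definition inferred (vi : bundle c -> R) (dq : seq (bundle c * price m))
    (vq : seq (bundle c)) (x : bundle c) : R :=
  if x \in vq then vi x
  else \big[Num.max/0]_(r <- dq | r.1 == x) pdot r.2 x.

Definition wdp_solution (w : 'I_n -> bundle c -> R) (a : allocation) :=
  feasible a /\ forall a' : allocation, feasible a' -> welfare w a' <= welfare w a.

End Auction.

(* One item is wanted by two bidders with values 1 and eps < delta.  A demand
   query at price eps/2 to the high bidder, accepted, certifies only the lower
   bound eps/2 on his value, and the WDP gives him the item.  Value queries of
   the empty bundle to the high bidder and of the item to the low bidder raise
   the low bidder's inferred value to eps > eps/2 while leaving the high
   bidder's at eps/2, so the WDP now gives the item away with efficiency eps. *)

From HB Require Import structures.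
From mathcomp Require Import all_boot all_order all_algebra.
From mathcomp Require Import reals lra.
Set Implicit Arguments. Unset Strict Implicit. Unset Printing Implicit Defensive.
Import Order.TTheory GRing.Theory Num.Theory.
Local Open Scope ring_scope.

Section Auction.
Variables (R : realType) (n m : nat) (c : 'I_m -> nat).
Implicit Types (w : 'I_n -> bundle c -> R) (a : allocation n c).
Implicit Types (vi : bundle c -> R) (x : bundle c) (p : price R m).
Implicit Types (dq : seq (bundle c * price R m)) (vq : seq (bundle c)).
Implicit Types (r : bundle c * price R m).

Lemma eq_welfare w w' : (forall i, w i =1 w' i) -> welfare w =1 welfare w'.
Proof. by move=> ww' a; apply: eq_bigr => i _; rewrite ww'. Qed.

Lemma eq_wdp_solution w w' a :
  (forall i, w i =1 w' i) -> wdp_solution w a -> wdp_solution w' a.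
Proof.
move=> ww' [fa opt]; split=> // a' fa'.
by rewrite -!(eq_welfare ww'); exact: opt.
Qed.

Lemma opt_welfareE w a0 : feasible a0 -> 0 <= welfare w a0 ->
  (forall a, feasible a -> welfare w a <= welfare w a0) ->
  opt_welfare w = welfare w a0.
Proof.
move=> fa0 w0 opt; apply/le_anti/andP; split.
  by apply: bigmax_le => // a; exact: opt.
by rewrite /opt_welfare (bigD1 a0) //= le_max lexx.
Qed.

Lemma pdot_ge0 p x : (forall j, 0 <= p j) -> 0 <= pdot p x.
Proof. by move=> p0; apply: sumr_ge0 => j _; rewrite mulr_ge0. Qed.

Lemma inferred_queried vi dq vq x : x \in vq -> inferred vi dq vq x = vi x.
Proof. by rewrite /inferred => ->. Qed.

Lemma inferred_nil vi vq x : x \notin vq -> inferred vi [::] vq x = 0.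
Proof. by rewrite /inferred big_nil => /negbTE ->. Qed.

Lemma inferred_seq1 vi r vq x : (forall j, 0 <= r.2 j) -> x \notin vq ->
  inferred vi [:: r] vq x = if x == r.1 then pdot r.2 x else 0.
Proof.
move=> r0 /negbTE xvq; rewrite /inferred xvq big_cons big_nil eq_sym.
by case: eqP => // _; rewrite max_l ?pdot_ge0.
Qed.

End Auction.

Definition unit_supply : 'I_1 -> nat := fun=> 1%N.
Definition nothing : bundle unit_supply := [ffun=> ord0].
Definition item : bundle unit_supply := [ffun=> ord_max].

Lemma neq_item_eq_nothing (x : bundle unit_supply) : x != item -> x = nothing.
Proof.
move=> xi; apply/ffunP => j; rewrite [j]ord1 ffunE; apply/val_inj/eqP => /=.
apply: contraNT xi => x0; apply/eqP/ffunP => k; rewrite [k]ord1 ffunE.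
by apply/val_inj; move: x0 => /=; case: (x ord0) => [[|[|//]] ?].
Qed.

Lemma item_neq_nothing : item != nothing.
Proof. by apply/eqP => /ffunP/(_ ord0); rewrite !ffunE. Qed.

Section UnitValue.
Variable R : realType.
Implicit Types (b q : R) (x : bundle unit_supply).

Definition unit_value b x : R := if x == item then b else 0.

Definition unit_price q : price R 1 := [ffun=> q].

Lemma unit_value_item b : unit_value b item = b.
Proof. by rewrite /unit_value eqxx. Qed.

Lemma unit_value_nothing b : unit_value b nothing = 0.
Proof. by rewrite /unit_value eq_sym (negbTE item_neq_nothing). Qed.

Lemma unit_value_ge0 b x : 0 <= b -> 0 <= unit_value b x.
Proof. by rewrite /unit_value; case: ifP. Qed.

Lemma pdot_unit_price q x : pdot (unit_price q) x = unit_value q x.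
Proof.
rewrite /pdot big_ord1 ffunE /unit_value.
have [->|/neq_item_eq_nothing ->] := eqVneq x item.
  by rewrite ffunE mulr1.
by rewrite ffunE mulr0.
Qed.

Lemma truthful_unit_demand b q :
  0 <= q <= b -> truthful_demand (unit_value b) (item, unit_price q).
Proof.
case/andP=> q0 qb; split=> [j|y] /=; first by rewrite ffunE.
rewrite !pdot_unit_price /unit_value eqxx.
by case: ifP => _; rewrite ?lexx // subr0 subr_ge0.
Qed.

Lemma inferred_unit_demand vi vq q x : 0 <= q -> x \notin vq ->
  inferred vi [:: (item, unit_price q)] vq x = unit_value q x.
Proof.
move=> q0 xvq; rewrite inferred_seq1 //= => [|j]; last by rewrite ffunE.
by rewrite pdot_unit_price /unit_value; case: (x == item).
Qed.

End UnitValue.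

Section SingleItem.
Variables (R : realType) (n : nat).
Implicit Types (a : allocation n unit_supply) (k : 'I_n).

Definition award k : allocation n unit_supply :=
  [ffun i => if i == k then item else nothing].

Definition no_award : allocation n unit_supply := [ffun=> nothing].

Lemma feasible_award k : feasible (award k).
Proof.
apply/forallP => j; rewrite (bigD1 k) //= big1 ?addn0.
  by rewrite ffunE eqxx /item ffunE.
by move=> i ik; rewrite ffunE (negbTE ik) ffunE.
Qed.

Lemma feasible_unit_supply a : feasible a -> a = no_award \/ exists k, a = award k.
Proof.
move=> /forallP/(_ ord0) fa.
have [k /eqP ak | none] := pickP (fun i => a i == item); [right; exists k | left].
  apply/ffunP => i; rewrite ffunE; case: eqP => [->//|/eqP ik].
  apply: neq_item_eq_nothing; apply: contraTneq fa => ai.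
  rewrite -ltnNge (bigD1 k) //= (bigD1 (P := fun j => j != k) i ik) /=.
  by rewrite ak ai /item ffunE addnA; apply: ltn_addr.
by apply/ffunP => i; rewrite ffunE; apply: neq_item_eq_nothing; rewrite none.
Qed.

Variable b : 'I_n -> R.
Let w i := unit_value (b i).

Lemma welfare_award k : welfare w (award k) = b k.
Proof.
rewrite /welfare (bigD1 k) //= big1 => [|i ik].
  by rewrite ffunE eqxx /w unit_value_item addr0.
by rewrite ffunE (negbTE ik) /w unit_value_nothing.
Qed.

Lemma welfare_no_award : welfare w no_award = 0.
Proof. by rewrite /welfare big1 // => i _; rewrite ffunE /w unit_value_nothing. Qed.

Lemma opt_welfare_unit_value k :
  (forall i, b i <= b k) -> 0 <= b k -> opt_welfare w = b k.
Proof.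
move=> bk bk0; rewrite -(welfare_award k) (opt_welfareE (feasible_award k)) //.
  by rewrite welfare_award.
move=> a /feasible_unit_supply [->|[l ->]].
  by rewrite welfare_no_award welfare_award.
by rewrite !welfare_award.
Qed.

Lemma efficiency_award k k' :
  (forall i, b i <= b k') -> 0 <= b k' -> efficiency w (award k) = b k / b k'.
Proof.
by move=> bk' bk'0; rewrite /efficiency welfare_award (opt_welfare_unit_value bk').
Qed.

Lemma wdp_solution_unit_value a k : wdp_solution w a ->
  0 < b k -> (forall i, i != k -> b i < b k) -> a = award k.
Proof.
move=> [/feasible_unit_supply fa opt] bk0 bk.
have := opt _ (feasible_award k); rewrite welfare_award.
case: fa => [->|[l ->]]; first by rewrite welfare_no_award leNgt bk0.
by rewrite welfare_award; case: (l =P k) => [->//|/eqP lk]; rewrite leNgt bk.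
Qed.

End SingleItem.

Lemma ord2_neq_max (i : 'I_2) : i != ord_max -> i = ord0.
Proof. by case: i => [[|[|//]] ?] //= _; exact/val_inj. Qed.

Theorem lemmaD7 (R : realType) (delta : R) : 0 < delta ->
  exists (n m : nat) (c : 'I_m -> nat) (v : 'I_n -> bundle c -> R)
         (dq : 'I_n -> seq (bundle c * price R m)) (vq : 'I_n -> bundle c),
    [/\ valid_values v,
        (forall i r, r \in dq i -> truthful_demand (v i) r),
        (forall a : allocation n c,
            wdp_solution (fun i => inferred (v i) (dq i) [::]) a ->
            efficiency v a = 1) &
        (forall a : allocation n c,
            wdp_solution (fun i => inferred (v i) (dq i) [:: vq i]) a ->
            efficiency v a < delta)].
Proof.
move=> delta0; set eps := Num.min delta 1 / 2; set q := eps / 2.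
have [eps_lt_delta eps_le1 q_gt0 q_lt_eps] :
    [/\ eps < delta, eps <= 1, 0 < q & q < eps].
  have : 0 < Num.min delta 1 by rewrite lt_min delta0 ltr01.
  have : Num.min delta 1 <= delta by rewrite ge_min lexx.
  have : Num.min delta 1 <= 1 by rewrite ge_min lexx orbT.
  by rewrite /q /eps; split; lra.
pose b (i : 'I_2) := if i == ord0 then 1 else eps.
pose dq (i : 'I_2) := if i == ord0 then [:: (item, unit_price q)] else [::].
pose vq (i : 'I_2) := if i == ord0 then nothing else item.
have infer_dq i : inferred (unit_value (b i)) (dq i) [::] =1
                  unit_value (if i == ord0 then q else 0).
  move=> x; rewrite /dq; case: ifP => _; first by rewrite inferred_unit_demand ?ltW.
  by rewrite inferred_nil // /unit_value if_same.
have infer_vq i : inferred (unit_value (b i)) (dq i) [:: vq i] =1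
                  unit_value (if i == ord0 then q else eps).
  move=> x; rewrite /dq /vq /b.
  case: ifP => _; have [->|/neq_item_eq_nothing ->] := eqVneq x item.
  - by rewrite inferred_unit_demand ?ltW // mem_seq1 item_neq_nothing.
  - by rewrite inferred_queried ?mem_head // !unit_value_nothing.
  - by rewrite inferred_queried ?mem_head.
  - by rewrite inferred_nil ?unit_value_nothing // mem_seq1 eq_sym item_neq_nothing.
have b_max i : b i <= b ord0 by rewrite /b eqxx; case: ifP.
exists 2%N, 1%N, unit_supply, (fun i => unit_value (b i)), dq, vq; split.
- by move=> i x; apply: unit_value_ge0; rewrite /b; case: ifP => _; lra.
- move=> i r; rewrite /dq /b; case: ifP => // _; rewrite mem_seq1 => /eqP ->.
  by apply: truthful_unit_demand; apply/andP; split; lra.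
- move=> a /(eq_wdp_solution infer_dq).
  move=> /(wdp_solution_unit_value (k := ord0)) -> //.
    by rewrite (efficiency_award _ b_max) /b eqxx; lra.
  by move=> i /negbTE ->; rewrite eqxx.
- move=> a /(eq_wdp_solution infer_vq).
  move=> /(wdp_solution_unit_value (k := ord_max)) -> /=.
  + by rewrite (efficiency_award _ b_max) /b eqxx /=; lra.
  + lra.
  + by move=> i /ord2_neq_max ->.
Qed.
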